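(* Let $q$ be a prime power and let $1\le t_1<\cdots<t_r<n$ be divisors of $n$ such that $t_i$ divides $t_{i+1}$ for $1\le i\le r-1$. Let $\mathcal{F}=(\mathcal{F}_1,\ldots,\mathcal{F}_r)=(\mathbb{F}_{q^{t_1}},\ldots,\mathbb{F}_{q^{t_r}})$ be the Galois flag of this type on $\mathbb{F}_{q^n}$ and let $\beta\in\mathbb{F}_{q^n}^*$. For $1\le i\le r$ write $\mathrm{Stab}_\beta(\mathcal{F}_i)=\{\gamma\in\langle\beta\rangle:\mathcal{F}_i\gamma=\mathcal{F}_i\}=\langle\beta\rangle\cap\mathbb{F}_{q^{t_i}}^*$. Then $d_f(\mathrm{Orb}_\beta(\mathcal{F}))\in\{0,2t_1,2(t_1+t_2),\ldots,2(t_1+\cdots+t_r)\}$. Moreover: (1) $d_f(\mathrm{Orb}_\beta(\mathcal{F}))=0$ if and only if $\mathrm{Stab}_\beta(\mathcal{F}_1)=\mathrm{Stab}_\beta(\mathcal{F}_r)=\langle\beta\rangle$; (2) $d_f(\mathrm{Orb}_\beta(\mathcal{F}))=2\sum_{i=1}^r t_i$ if and only if $\mathrm{Stab}_\beta(\mathcal{F}_1)=\mathrm{Stab}_\beta(\mathcal{F}_r)\neq\langle\beta\rangle$; (3) $d_f(\mathrm{Orb}_\beta(\mathcal{F}))=2\sum_{i=1}^{j-1}t_i$ if and only if $\mathrm{Stab}_\beta(\mathcal{F}_1)\neq\mathrm{Stab}_\beta(\mathcal{F}_r)$ and $j\in\{2,\ldots,r\}$ is the minimum index such that $\mathrm{S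tab}_\beta(\mathcal{F}_1)\subsetneq\mathrm{Stab}_\beta(\mathcal{F}_j)$.
   Context: $\mathbb{F}_{q^n}$ is regarded as an $\mathbb{F}_q$-vector space. For $\gamma\in\mathbb{F}_{q^n}^*$, $\mathcal{U}\gamma=\{u\gamma:u\in\mathcal{U}\}$ and $\mathcal{F}\gamma=(\mathcal{F}_1\gamma,\ldots,\mathcal{F}_r\gamma)$. For $\beta$ of multiplicative order $|\beta|$, $\mathrm{Orb}_\beta(\mathcal{F})=\{\mathcal{F}\beta^j:0\le j\le|\beta|-1\}$. Subspace distance: $d_S(\mathcal{U},\mathcal{V})=\dim(\mathcal{U}+\mathcal{V})-\dim(\mathcal{U}\cap\mathcal{V})$; flag distance $d_f(\mathcal{F},\mathcal{F}')=\sum_{i=1}^r d_S(\mathcal{F}_i,\mathcal{F}'_i)$. The minimum distance $d_f(\mathcal{C})$ of a set of flags is the minimum flag distance between distinct elements, and $0$ if $|\mathcal{C}|=1$. *)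

From HB Require Import structures.
From mathcomp Require Import all_boot all_order all_algebra all_fingroup all_field.
Set Implicit Arguments. Unset Strict Implicit. Unset Printing Implicit Defensive.
Import GRing.Theory.
Local Open Scope ring_scope.

Section GaloisFlags.
Variables (F : finFieldType) (L : fieldExtType F).

(* q = #|F|, n = \dim {:L}; L is F_{q^n} viewed as an F_q-vector space. *)
Definition qq : nat := #|F|.
Definition nn : nat := \dim {:L}.

(* F_{q^t} inside L : the set of x with x^(q^t) = x, as an F-subspace
   (x |-> x^(q^t) is F-linear, so linfun coincides with it). *)
Definition GF (t : nat) : {vspace L} :=
  fixedSpace (linfun (fun x : L => x ^+ (qq ^ t))).

Definition vmul (U : {vspace L}) (g : L) : {vspace L} := (amulr g @: U)%VS.

Definition dS (U V : {vspace L}) : nat := (\dim (U + V) - \dim (U :&: V))%N.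

Definition flag (r : nat) := {ffun 'I_r -> {vspace L}}.

Definition flag_mul r (Fl : flag r) (g : L) : flag r :=
  [ffun i => vmul (Fl i) g].

Definition dflag r (A B : flag r) : nat := (\sum_(i < r) dS (A i) (B i))%N.

(* minimum distance of a (finite) set of flags given as a list;
   0 if it has a single element *)
Definition min_dist r (C : seq (flag r)) : nat :=
  let ds := [seq dflag p.1 p.2 | p <- [seq (x, y) | x <- C, y <- C]
                                  & p.1 != p.2] in
  if ds is d :: ds' then foldr minn d ds' else 0%N.

(* multiplicative order of beta (beta <> 0): least k >= 1 with beta^k = 1;
   it is at most q^n - 1 < q^n = #|L| *)
Definition morder (b : L) : nat :=
  (find (fun k => b ^+ k.+1 == 1) (iota 0 (qq ^ nn))).+1.

Definition orb r (Fl : flag r) (b : L) : seq (flag r) :=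
  [seq flag_mul Fl (b ^+ j) | j <- iota 0 (morder b)].

Definition cyc (b : L) (g : L) : Prop := exists j : nat, g = b ^+ j.

Definition stab (b : L) (U : {vspace L}) (g : L) : Prop :=
  cyc b g /\ vmul U g = U.

(* the Galois flag (F_{q^{t_0}}, ..., F_{q^{t_{r-1}}}), 0-based indices *)
Definition galois_flag (r : nat) (t : nat -> nat) : flag r :=
  [ffun i : 'I_r => GF (t i)].

End GaloisFlags.

Definition pset_eq {T} (A B : T -> Prop) : Prop := forall x, A x <-> B x.
Definition pset_sub {T} (A B : T -> Prop) : Prop := forall x, A x -> B x.
Definition pset_ssub {T} (A B : T -> Prop) : Prop := pset_sub A B /\ ~ pset_eq A B.

From HB Require Import structures.
From mathcomp Require Import all_boot all_order all_algebra all_fingroup all_solvable all_field.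
From mathcomp Require Import zify.
Set Implicit Arguments. Unset Strict Implicit. Unset Printing Implicit Defensive.
Import GRing.Theory.
Local Open Scope ring_scope.

(* Write K_i = F_{q^{t_i}}.  Since K_i is a field, the cosets K_i a and K_i b
   coincide when b/a lies in K_i and otherwise meet only in 0, so they are at
   subspace distance 0 or 2 t_i.  The distance between the flags F a and F b is
   therefore the sum of 2 t_i over the i with b/a outside K_i; the K_i being
   nested, this is 2 (t_1 + ... + t_{j-1}) for the first j with b/a in K_j.
   Minimising over b/a in <beta> outside K_1 yields the first j at which
   <beta> ∩ K_j outgrows <beta> ∩ K_1, i.e. Stab(F_1) is strictly contained
   in Stab(F_j).  That dim F_{q^t} = t for t | n comes from Galois theory:
   F_{q^t} is fixed by alpha^t, alpha the Frobenius generating the cyclic group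
   Gal(L / F_q) of order n, and alpha^t has order n / t. *)

Lemma expf_card_exp (F : finFieldType) (a : F) t : a ^+ (#|F| ^ t) = a.
Proof. by elim: t => [|t IH]; rewrite ?expr1 // expnSr exprM IH expf_card. Qed.

Section GaloisSubfield.
Variables (F : finFieldType) (L : fieldExtType F).

Lemma frobenius_exp_additive t : zmod_morphism (fun x : L => x ^+ (#|F| ^ t)).
Proof.
have [p _ pcharFp] := finPcharP F.
have pcharL : p \in [pchar L] by rewrite (pchar_lalg L).
move=> x y; rewrite (card_pprimeChar pcharFp) -expnM.
elim: (_ * t)%N => [|k IHk]; first by rewrite !expr1.
by rewrite expnSr !exprM IHk -!(pFrobenius_autE pcharL) rmorphB.
Qed.

Lemma frobenius_exp_scalable t : scalable (fun x : L => x ^+ (#|F| ^ t)).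
Proof. by move=> a x; rewrite /= exprZn expf_card_exp. Qed.

Lemma memGF t x : (x \in GF L t) = (x ^+ (qq F ^ t) == x).
Proof.
pose frobA := GRing.isZmodMorphism.Build _ _ _ (frobenius_exp_additive t).
pose frobZ := GRing.isScalable.Build _ _ _ _ _ (frobenius_exp_scalable t).
pose frob : {linear L -> L} := HB.pack (fun x : L => x ^+ (#|F| ^ t)) frobA frobZ.
by rewrite /GF -[fun x => _]/(frob : L -> L); apply/fixedSpaceP/eqP; rewrite lfunE.
Qed.

Lemma GF_is_aspace t : is_aspace (GF L t).
Proof.
rewrite /is_aspace has_algid1 ?memGF ?expr1n //=.
by apply/prodvP => x y; rewrite !memGF exprMn => /eqP-> /eqP->.
Qed.

Definition GF_aspace t : {aspace L} := ASpace (GF_is_aspace t).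

Lemma GF_subv s t : (s %| t)%N -> (GF L s <= GF L t)%VS.
Proof.
case/dvdnP=> k ->; apply/subvP=> x; rewrite !memGF mulnC expnM => /eqP xs.
by apply/eqP; elim: k => [|k IHk]; rewrite ?expr1 // expnSr exprM IHk.
Qed.

End GaloisSubfield.

Lemma dim_GF_splitting (F : finFieldType) (L : splittingFieldType F) t :
  (t %| \dim {:L})%N -> \dim (GF L t) = t.
Proof.
move=> t_dvd_n; set n := \dim {:L} in t_dvd_n.
have [alpha gen_alpha alphaE] := finField_galois_generator (sub1v {:L}%AS).
have alphaX k x : (alpha ^+ k)%g x = x ^+ (qq F ^ k).
  elim: k => [|k IHk]; first by rewrite expg0 gal_id expr1.
  by rewrite expgSr galM ?memvf // IHk alphaE ?memvf // dimv1 expn1 expnSr exprM.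
have fixedE : fixedField <[alpha ^+ t]>%g = GF L t.
  apply/vspaceP => x; rewrite memGF; apply/(fixedFieldP (memvf x))/eqP.
    by move/(_ _ (cycle_id _)); rewrite alphaX.
  move=> xt _ /cycleP[k ->]; rewrite -expgM alphaX expnM.
  by elim: k => [|k IHk]; rewrite ?expr1 // expnSr exprM IHk xt.
have o_alpha : #[alpha]%g = n.
  by rewrite orderE -(eqP gen_alpha) -galois_dim ?finField_galois ?sub1v // dimv1 divn1.
have := dim_fixedField <[alpha ^+ t]>%G.
rewrite /= -orderE orderXdiv o_alpha // fixedE => index_eq.
have d_dvd_n : (\dim (GF L t) %| n)%N by rewrite -fixedE field_dimS ?subvf.
have n_gt0 : (0 < n)%N by rewrite adim_gt0.
by rewrite -[RHS](mulKn t n_gt0) -(divnA n t_dvd_n) index_eq (divnA _ d_dvd_n) mulKn.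
Qed.

Lemma dim_GF (F : finFieldType) (L : fieldExtType F) t :
  (t %| nn L)%N -> \dim (GF L t) = t.
Proof.
move: t; wlog [{}L -> t]: L / exists galL : splittingFieldType F, L = galL.
  by pose galL := FinSplittingFieldType F L => /(_ galL); apply; exists galL.
exact: dim_GF_splitting.
Qed.

Section SubfieldCosets.
Variables (F : finFieldType) (L : fieldExtType F) (A : {aspace L}).
Implicit Types a b g : L.

Lemma vmulE g : vmul A g = (A * <[g]>)%VS.
Proof. exact: limg_amulr. Qed.

Lemma vmul_subv a b : a != 0 -> b / a \in A -> (vmul A b <= vmul A a)%VS.
Proof.
move=> a0 ba; apply/subvP => y; rewrite !vmulE => /memv_cosetP[u Au ->].
by apply/memv_cosetP; exists (u * (b / a)); [rewrite memvM | rewrite -mulrA divfK].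
Qed.

Lemma vmul_eq a b : a != 0 -> b != 0 -> (vmul A a == vmul A b) = (b / a \in A).
Proof.
move=> a0 b0; apply/eqP/idP => [Aab | ba].
  have : b \in vmul A b by rewrite vmulE; apply/memv_cosetP; exists 1; rewrite ?mem1v ?mul1r.
  by rewrite -Aab vmulE => /memv_cosetP[u Au ->]; rewrite mulfK.
have ab : a / b \in A by rewrite -invf_div memvV.
by apply/eqP; rewrite eqEsubv !vmul_subv.
Qed.

Lemma vmul1 : vmul A 1 = A.
Proof. by rewrite vmulE prodv1. Qed.

Lemma vmul_id g : g != 0 -> vmul A g = A <-> g \in A.
Proof.
move=> g0; have := vmul_eq (oner_neq0 L) g0; rewrite vmul1 divr1 eq_sym => <-.
by split=> /eqP.
Qed.

Lemma dS_vmul a b : a != 0 -> b != 0 ->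
  dS (vmul A a) (vmul A b) = if b / a \in A then 0%N else (2 * \dim A)%N.
Proof.
move=> a0 b0; case: ifPn => [ba | ba].
  by move: ba; rewrite -vmul_eq // /dS => /eqP->; rewrite addvv capvv subnn.
have cap0 : (vmul A a :&: vmul A b = 0)%VS.
  apply/eqP; rewrite -subv0; apply/subvP => y; rewrite memv_cap !vmulE memv0.
  case/andP=> /memv_cosetP[u Au ->] /memv_cosetP[v Av uav].
  have [v0 | v0] := eqVneq v 0; first by rewrite uav v0 mul0r.
  suff : b / a \in A by rewrite (negPf ba).
  have -> : b / a = u / v by apply: (canLR (mulfK a0)); rewrite mulrAC uav [v * b]mulrC mulfK.
  by rewrite memvM ?memvV.
have dim_sum := dimv_sum_cap (vmul A a) (vmul A b).
rewrite cap0 dimv0 addn0 in dim_sum.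
by rewrite /dS dim_sum cap0 dimv0 subn0 !vmulE !dim_cosetv_unit ?unitfE // addnn mul2n.
Qed.

End SubfieldCosets.

Section CyclicSubgroup.
Variables (F : finFieldType) (L : fieldExtType F) (beta : L).
Hypothesis beta_neq0 : beta != 0.
Local Notation m := (morder beta).

Lemma expr_morder : beta ^+ m = 1.
Proof.
set Q := (qq F ^ nn L)%N.
have betaQ : beta ^+ Q = beta.
  by have := Fermat's_little_theorem {:L}%AS beta; rewrite memvf => /esym/eqP.
have Q_gt1 : (1 < Q)%N by rewrite -(expn0 (qq F)) ltn_exp2l ?finNzRing_gt1 ?adim_gt0.
have has_unit_power : has (fun k => beta ^+ k.+1 == 1) (iota 0 Q).
  apply/hasP; exists Q.-2; first by rewrite mem_iota; lia.
  apply/eqP/(mulIf beta_neq0); rewrite mul1r -exprSr.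
  by have -> : Q.-2.+2 = Q by lia.
have := nth_find 0%N has_unit_power; rewrite nth_iota ?add0n => [/eqP //|].
by move: has_unit_power; rewrite has_find size_iota.
Qed.

Lemma cycP g : cyc beta g <-> exists2 e, (e < m)%N & g = beta ^+ e.
Proof.
split=> [[j ->] | [e _ ->]]; last by exists e.
exists (j %% m)%N; first by rewrite ltn_mod.
by rewrite {1}(divn_eq j m) exprD mulnC exprM expr_morder expr1n mul1r.
Qed.

Lemma cyc_neq0 g : cyc beta g -> g != 0.
Proof. by case=> j ->; rewrite expf_neq0. Qed.

Lemma cyc_div g h : cyc beta g -> cyc beta h -> cyc beta (g / h).
Proof.
have betaV : beta^-1 = beta ^+ m.-1.
  by apply: (mulIf beta_neq0); rewrite mulVf // -exprSr prednK // expr_morder.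
by case=> i -> [j ->]; exists (i + m.-1 * j)%N; rewrite -exprVn betaV -exprM exprD.
Qed.

Lemma stabE (A : {aspace L}) g : stab beta A g <-> cyc beta g /\ g \in A.
Proof.
by split=> [] [cyc_g Ag]; split=> //; apply/(vmul_id A (cyc_neq0 cyc_g)).
Qed.

End CyclicSubgroup.

Lemma foldr_minn_leq (d : nat) s x : x \in d :: s -> (foldr minn d s <= x)%N.
Proof.
elim: s x => [|y s IHs] x /=; first by rewrite mem_seq1 => /eqP->.
rewrite !inE geq_min => /or3P[/eqP-> | /eqP-> | xs].
- by rewrite IHs ?mem_head ?orbT.
- by rewrite leqnn.
- by rewrite IHs ?inE ?xs ?orbT.
Qed.

Lemma leq_foldr_minn (v d : nat) s : all (leq v) (d :: s) -> (v <= foldr minn d s)%N.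
Proof.
elim: s => [|y s IHs] /=; first by case/andP.
by case/and3P=> vd vy vs; rewrite leq_min vy IHs //= vd.
Qed.

Section MinimumDistance.
Variables (F : finFieldType) (L : fieldExtType F) (r : nat).
Implicit Types (C : seq (flag L r)) (v : nat).

Lemma min_dist_attained C v :
  (forall x y, x \in C -> y \in C -> x != y -> (v <= dflag x y)%N) ->
  (exists x y, [/\ x \in C, y \in C, x != y & dflag x y = v]) ->
  min_dist C = v.
Proof.
move=> lb [x [y [xC yC xy dxy]]]; rewrite /min_dist.
set ds := [seq _ | p <- _ & _].
have v_ds : v \in ds.
  by rewrite -dxy; apply/mapP; exists (x, y); rewrite // mem_filter xy allpairs_f.
have lb_ds : all (leq v) ds.
  apply/allP => z /mapP[p]; rewrite mem_filter => /andP[p12].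
  by case/allpairsP=> [[x' y'] /= [x'C y'C p_eq]] ->; rewrite p_eq in p12 *; apply: lb.
case: ds v_ds lb_ds => [//|d ds'] v_ds lb_ds.
by apply/eqP; rewrite eqn_leq foldr_minn_leq // leq_foldr_minn.
Qed.

Lemma min_dist_const C : {in C &, forall x y, x = y} -> min_dist C = 0%N.
Proof.
move=> C_const; rewrite /min_dist.
suff -> : [seq p <- [seq (x, y) | x <- C, y <- C] | p.1 != p.2] = [::] by [].
apply/eqP; rewrite -size_eq0 size_filter eqn0Ngt -has_count.
by apply/hasPn => p /allpairsP[[x y] /= [xC yC ->]]; rewrite /= (C_const x y xC yC) eqxx.
Qed.

End MinimumDistance.

Lemma dvdn_chain (t : nat -> nat) r i j :
  (forall k, (k.+1 < r)%N -> (t k %| t k.+1)%N) -> (i <= j < r)%N -> (t i %| t j)%N.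
Proof.
move=> t_dvdS /andP[]; elim: j => [|j IHj]; first by rewrite leqn0 => /eqP->.
rewrite leq_eqVlt => /orP[/eqP-> // | ij] jr.
exact: dvdn_trans (IHj ij (ltnW jr)) (t_dvdS j jr).
Qed.

Section PrefixSums.
Variables (t : nat -> nat) (r : nat).

Lemma sum_prefix_mask j : (j <= r)%N ->
  (\sum_(i < r) (if (i < j)%N then 2 * t i else 0) = 2 * \sum_(i < j) t i)%N.
Proof. by move=> jr; rewrite (big_ord_widen r t jr) big_distrr [RHS]big_mkcond. Qed.

Hypothesis t_gt0 : forall i, (i < r)%N -> (0 < t i)%N.

Lemma ltn_sum_prefix k k' : (k < k' <= r)%N -> (\sum_(i < k) t i < \sum_(i < k') t i)%N.
Proof.
case/andP=> kk' k'r; rewrite -!(big_mkord xpredT) (big_cat_nat _ (ltnW kk')) //=.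
by rewrite -[X in (X < _)%N]addn0 ltn_add2l big_ltn //= ltn_addr // t_gt0 //; lia.
Qed.

Lemma double_sum_prefix_inj k k' : (k <= r)%N -> (k' <= r)%N ->
  (2 * \sum_(i < k) t i = 2 * \sum_(i < k') t i)%N -> k = k'.
Proof.
move=> kr k'r /eqP; rewrite eqn_pmul2l // => /eqP Ekk'.
by case: (ltngtP k k') => // lt; [have := @ltn_sum_prefix k k' | have := @ltn_sum_prefix k' k];
  rewrite lt ?kr ?k'r Ekk' ltnn => /(_ isT).
Qed.

Lemma double_sum_prefix_eq0 k : (k <= r)%N -> (2 * \sum_(i < k) t i = 0)%N <-> k = 0%N.
Proof.
move=> kr; split=> [sum0 | ->]; last by rewrite big_ord0.
by apply: double_sum_prefix_inj; rewrite ?sum0 ?big_ord0.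
Qed.

End PrefixSums.

Definition subfield_flag (F : finFieldType) (L : fieldExtType F) r
  (K : nat -> {aspace L}) : flag L r := [ffun i : 'I_r => asval (K i)].

Section SubfieldFlagOrbit.
Variables (F : finFieldType) (L : fieldExtType F).
Variables (r : nat) (K : nat -> {aspace L}) (t : nat -> nat) (beta : L).
Hypothesis r_gt0 : (0 < r)%N.
Hypothesis K_chain : forall i j, (i <= j < r)%N -> (K i <= K j)%VS.
Hypothesis dim_K : forall i, (i < r)%N -> \dim (K i) = t i.
Hypothesis beta_neq0 : beta != 0.

Local Notation Fl := (subfield_flag r K).
Local Notation m := (morder beta).
Local Notation St i := (stab beta (K i)).

Lemma memK_chain i j x : (i <= j < r)%N -> x \in K i -> x \in K j.
Proof. by move/K_chain/subvP; apply. Qed.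

Lemma t_gt0 i : (i < r)%N -> (0 < t i)%N.
Proof. by move=> ir; rewrite -dim_K ?adim_gt0. Qed.

Lemma flag_mul_eq a b : a != 0 -> b != 0 ->
  (flag_mul Fl a == flag_mul Fl b) = (b / a \in K 0).
Proof.
move=> a0 b0; apply/eqP/idP => [/ffunP/(_ (Ordinal r_gt0)) | ba].
  by rewrite !ffunE => /eqP; rewrite vmul_eq.
apply/ffunP => i; rewrite !ffunE; apply/eqP; rewrite vmul_eq //.
by apply: memK_chain ba; rewrite /=.
Qed.

Lemma dflag_flag_mul a b : a != 0 -> b != 0 ->
  dflag (flag_mul Fl a) (flag_mul Fl b) =
  (\sum_(i < r) (if b / a \in K i then 0 else 2 * t i))%N.
Proof. by move=> a0 b0; apply: eq_bigr => i _; rewrite !ffunE dS_vmul ?dim_K. Qed.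

(* With 0-based indices: [orbit_moves] says that <beta> is not contained in
   K 0, i.e. the orbit has more than one flag; [stab_jump k] says that
   Stab(K 0) is strictly contained in Stab(K k); [first_jump] is the least such
   k, or r if there is none. *)
Definition orbit_moves := [exists e : 'I_m, beta ^+ e \notin K 0].

Definition stab_jump k :=
  [exists e : 'I_m, (beta ^+ e \in K k) && (beta ^+ e \notin K 0)].

Definition first_jump := find stab_jump (iota 0 r).

Lemma orbit_movesP : reflect (exists g, cyc beta g /\ g \notin K 0) orbit_moves.
Proof.
apply: (iffP existsP) => [[e Ke] | [g [/(cycP beta_neq0)[e e_lt ->] Kg]]].
  by exists (beta ^+ e); split=> //; exists e.
by exists (Ordinal e_lt).
Qed.

Lemma stab_jumpP k :
  reflect (exists g, [/\ cyc beta g, g \in K k & g \notin K 0]) (stab_jump k).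
Proof.
apply: (iffP existsP) => [[e /andP[Ke Ke0]] | [g [/(cycP beta_neq0)[e e_lt ->]]]].
  by exists (beta ^+ e); split=> //; exists e.
by exists (Ordinal e_lt); apply/andP.
Qed.

Lemma stab_jump_moves k : stab_jump k -> orbit_moves.
Proof. by case/stab_jumpP=> g [cyc_g _ Kg]; apply/orbit_movesP; exists g. Qed.

Lemma first_jump_le : (first_jump <= r)%N.
Proof. by rewrite -[X in (_ <= X)%N](size_iota 0 r) find_size. Qed.

Lemma stab_jumpE k : (k < r)%N -> stab_jump k = (first_jump <= k)%N.
Proof.
move=> kr; apply/idP/idP => [jump_k | jk].
  rewrite leqNgt; apply: contraL jump_k => /(before_find 0%N).
  by rewrite nth_iota // add0n => ->.
have jr := leq_ltn_trans jk kr.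
have has_jump : has stab_jump (iota 0 r) by rewrite has_find size_iota.
have /stab_jumpP[g [cyc_g Kg Kg0]] := nth_find 0%N has_jump.
rewrite nth_iota // add0n in Kg.
by apply/stab_jumpP; exists g; split=> //; apply: memK_chain Kg; rewrite jk.
Qed.

Lemma first_jump_gt0 : (0 < first_jump)%N.
Proof.
rewrite ltnNge -stab_jumpE //; apply/stab_jumpP => [[g [_ Kg]]].
by rewrite Kg.
Qed.

Lemma first_jump_eq_r : ~~ orbit_moves -> first_jump = r.
Proof.
move=> still; apply/eqP; rewrite eqn_leq first_jump_le leqNgt /=.
by apply: contra still => jr; apply: (@stab_jump_moves first_jump); rewrite stab_jumpE.
Qed.

Lemma notin_K_before_first_jump g i :
  cyc beta g -> g \notin K 0 -> (i < first_jump)%N -> g \notin K i.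
Proof.
move=> cyc_g Kg0 ij; have ir := leq_trans ij first_jump_le.
apply: contraL ij => Kg; rewrite -leqNgt -stab_jumpE //.
by apply/stab_jumpP; exists g.
Qed.

Lemma stab_sub k : (k < r)%N -> pset_sub (St 0) (St k).
Proof.
move=> kr g /(stabE beta_neq0)[cyc_g Kg]; apply/(stabE beta_neq0); split=> //.
exact: memK_chain Kg.
Qed.

Lemma stab_eq k : (k < r)%N -> pset_eq (St 0) (St k) <-> (k < first_jump)%N.
Proof.
move=> kr; rewrite ltnNge -stab_jumpE //; split=> [St0k | still g].
  apply/stab_jumpP => [[g [cyc_g Kg Kg0]]].
  have /St0k/(stabE beta_neq0)[_ Kg0'] : St k g by apply/(stabE beta_neq0).
  by rewrite Kg0' in Kg0.
split; first exact: stab_sub.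
case/(stabE beta_neq0)=> cyc_g Kg; apply/(stabE beta_neq0); split=> //.
by apply: contraR still => Kg0; apply/stab_jumpP; exists g.
Qed.

Lemma stab_ssub k : (k < r)%N -> pset_ssub (St 0) (St k) <-> (first_jump <= k)%N.
Proof.
move=> kr; rewrite /pset_ssub (stab_eq kr) ltnNge.
split=> [[_ jk] | jk]; first exact/negPn/negP.
by split; [exact: stab_sub | rewrite jk].
Qed.

Lemma stab_cyc : pset_eq (St 0) (cyc beta) <-> ~~ orbit_moves.
Proof.
split=> [St0_cyc | still g].
  by apply/orbit_movesP=> [[g [/St0_cyc/(stabE beta_neq0)[_ Kg] /negP]]].
split=> [/(stabE beta_neq0)[] // | cyc_g]; apply/(stabE beta_neq0); split=> //.
by apply: contraR still => Kg0; apply/orbit_movesP; exists g.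
Qed.

Lemma dflag_orbit_lower g : cyc beta g -> g \notin K 0 ->
  (2 * \sum_(i < first_jump) t i <=
   \sum_(i < r) (if g \in K i then 0 else 2 * t i))%N.
Proof.
move=> cyc_g Kg0; rewrite -(sum_prefix_mask t first_jump_le); apply: leq_sum => i _.
by case: ifP => // ij; rewrite (negPf (notin_K_before_first_jump cyc_g Kg0 ij)).
Qed.

Lemma dflag_orbit_attained : orbit_moves -> exists2 g, cyc beta g /\ g \notin K 0 &
  (\sum_(i < r) (if g \in K i then 0 else 2 * t i) = 2 * \sum_(i < first_jump) t i)%N.
Proof.
move=> moves.
have [g [cyc_g Kg0 Kgj]] : exists g, [/\ cyc beta g, g \notin K 0 &
    (first_jump < r)%N -> g \in K first_jump].
  have [jr | rj] := ltnP first_jump r.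
    have /stab_jumpP[g [? ? ?]] : stab_jump first_jump by rewrite stab_jumpE.
    by exists g.
  by have /orbit_movesP[g [? ?]] := moves; exists g; split=> //; rewrite ltnNge rj.
exists g; first by [].
rewrite -(sum_prefix_mask t first_jump_le); apply: eq_bigr => i _.
case: (ltnP i first_jump) => ij.
  by rewrite (negPf (notin_K_before_first_jump cyc_g Kg0 ij)).
have jr := leq_ltn_trans ij (ltn_ord i).
by rewrite (memK_chain _ (Kgj jr)) // ij /=.
Qed.

Lemma min_dist_orbit : min_dist (orb Fl beta) =
  if orbit_moves then (2 * \sum_(i < first_jump) t i)%N else 0%N.
Proof.
have beta_exp_neq0 e : beta ^+ e != 0 by rewrite expf_neq0.
have cyc_exp e : cyc beta (beta ^+ e) by exists e.
have orb_beta_exp e : (e < m)%N -> flag_mul Fl (beta ^+ e) \in orb Fl beta.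
  by move=> e_lt; apply: (map_f (fun j => flag_mul Fl (beta ^+ j))); rewrite mem_iota.
case: ifP => [moves | /negbT still].
  apply: min_dist_attained => [_ _ /mapP[i _ ->] /mapP[j _ ->] | ].
    rewrite flag_mul_eq // dflag_flag_mul // => Kji.
    exact: dflag_orbit_lower (cyc_div beta_neq0 (cyc_exp _) (cyc_exp _)) Kji.
  have [g [/(cycP beta_neq0)[e e_lt ->] Kg0] dflag_g] := dflag_orbit_attained moves.
  exists (flag_mul Fl (beta ^+ 0)), (flag_mul Fl (beta ^+ e)).
  by rewrite !orb_beta_exp // flag_mul_eq // dflag_flag_mul // expr0 divr1.
apply: min_dist_const => _ _ /mapP[i _ ->] /mapP[j _ ->]; apply/eqP.
rewrite flag_mul_eq //; apply: contraR still => Kji.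
by apply/orbit_movesP; exists (beta ^+ j / beta ^+ i); split=> //; exact: cyc_div.
Qed.

Lemma min_dist_orbit_eq0 : min_dist (orb Fl beta) = 0%N <-> ~~ orbit_moves.
Proof.
rewrite min_dist_orbit; case: ifPn => moves; split=> //.
by move/(double_sum_prefix_eq0 t_gt0 first_jump_le) => j0; have := first_jump_gt0; rewrite j0.
Qed.

Lemma min_dist_orbit_eq k : (0 < k <= r)%N ->
  min_dist (orb Fl beta) = (2 * \sum_(i < k) t i)%N <-> orbit_moves /\ first_jump = k.
Proof.
case/andP=> k_gt0 kr; rewrite min_dist_orbit; case: ifPn => moves.
  by split=> [/(double_sum_prefix_inj t_gt0) -> | [_ ->]] //; rewrite first_jump_le.
by split=> [/esym/(double_sum_prefix_eq0 t_gt0 kr) k0 | []]; rewrite // k0 in k_gt0.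
Qed.

Theorem subfield_flag_orbit_min_dist :
  let d := min_dist (orb Fl beta) in
  ((exists k, (k <= r)%N /\ d = (2 * \sum_(i < k) t i)%N)) /\
  (d = 0%N <-> pset_eq (St 0%N) (St r.-1) /\ pset_eq (St 0%N) (cyc beta)) /\
  (d = (2 * \sum_(i < r) t i)%N <->
     pset_eq (St 0%N) (St r.-1) /\ ~ pset_eq (St 0%N) (cyc beta)) /\
  (forall j, (1 <= j < r)%N ->
     (d = (2 * \sum_(i < j) t i)%N <->
        ~ pset_eq (St 0%N) (St r.-1) /\ pset_ssub (St 0%N) (St j) /\
        (forall k, (1 <= k < j)%N -> ~ pset_ssub (St 0%N) (St k)))).
Proof.
have r1_lt : (r.-1 < r)%N by rewrite prednK.
have jj_le := first_jump_le.
move=> d; split; [|split; [|split]].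
- rewrite /d min_dist_orbit; case: ifP => _; first by exists first_jump.
  by exists 0%N; rewrite big_ord0.
- rewrite min_dist_orbit_eq0; split=> [still | [_ /stab_cyc //]].
  by split; [apply/(stab_eq r1_lt); rewrite first_jump_eq_r | exact/stab_cyc].
- rewrite min_dist_orbit_eq ?r_gt0 ?leqnn //.
  split=> [[moves jj_r] | [/(stab_eq r1_lt) r1_jj not_cyc]].
    split; first by apply/(stab_eq r1_lt); rewrite jj_r.
    by move/stab_cyc/negP; apply.
  split; last by lia.
  by apply: contraT => still; case: not_cyc; apply/stab_cyc.
move=> j /andP[j_gt0 jr]; rewrite min_dist_orbit_eq; last by rewrite j_gt0 ltnW.
split=> [[moves jj_j] | [_ [/(stab_ssub jr) jj_j before]]].
  split; first by move/(stab_eq r1_lt); rewrite jj_j; lia.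
  split=> [|k /andP[_ kj]]; first by apply/(stab_ssub jr); rewrite jj_j.
  by move/(stab_ssub (ltn_trans kj jr)); rewrite jj_j; lia.
have {}jj_j : first_jump = j.
  apply/eqP; rewrite eqn_leq jj_j leqNgt; apply/negP => jj_lt.
  apply: (before first_jump); first by rewrite first_jump_gt0 jj_lt.
  exact/(stab_ssub (ltn_trans jj_lt jr)).
split=> //; apply: contraT => still.
by have := first_jump_eq_r still; lia.
Qed.

End SubfieldFlagOrbit.

Theorem theorem4p14 (F : finFieldType) (L : fieldExtType F)
    (r : nat) (t : nat -> nat) (beta : L) :
  (0 < r)%N ->
  (0 < t 0%N)%N ->
  (forall i, (i < r)%N -> (t i < nn L)%N /\ (t i %| nn L)%N) ->
  (forall i, (i.+1 < r)%N -> (t i < t i.+1)%N /\ (t i %| t i.+1)%N) ->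
  beta != 0 ->
  let Fl := galois_flag L r t in
  let d := min_dist (orb Fl beta) in
  let St := fun i : nat => stab beta (GF L (t i)) in
  ((exists k, (k <= r)%N /\ d = (2 * \sum_(i < k) t i)%N)) /\
  (d = 0%N <-> pset_eq (St 0%N) (St r.-1) /\ pset_eq (St 0%N) (cyc beta)) /\
  (d = (2 * \sum_(i < r) t i)%N <->
     pset_eq (St 0%N) (St r.-1) /\ ~ pset_eq (St 0%N) (cyc beta)) /\
  (forall j, (1 <= j < r)%N ->
     (d = (2 * \sum_(i < j) t i)%N <->
        ~ pset_eq (St 0%N) (St r.-1) /\ pset_ssub (St 0%N) (St j) /\
        (forall k, (1 <= k < j)%N -> ~ pset_ssub (St 0%N) (St k)))).
Proof.
move=> r_gt0 _ t_dvd_n t_chain beta_neq0.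
have t_dvd i j : (i <= j < r)%N -> (t i %| t j)%N.
  by apply: dvdn_chain => k kr; have [] := t_chain k kr.
apply: (@subfield_flag_orbit_min_dist _ _ r (fun i => GF_aspace L (t i))) => //.
- by move=> i j ij; apply/GF_subv/t_dvd.
- by move=> i ir; rewrite dim_GF //; have [] := t_dvd_n i ir.
Qed.
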